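(* Let $f(z)=z+\sum_{n=2}^{\infty}a_nz^n$ belong to the class $\mathcal{S}_u^*$, and let its logarithmic coefficients $\gamma_n$ be defined by $\log\frac{f(z)}{z}=2\sum_{n=1}^{\infty}\gamma_nz^n$. Then $$|\gamma_1\gamma_3-\gamma_2^2|\le\frac1{16},$$ and the estimate is sharp, i.e. there exists a function $f\in\mathcal{S}_u^*$ for which equality holds.
   Context: $\mathbb{D}=\{z\in\mathbb{C}:|z|<1\}$. The class $\mathcal{S}_u^*$ consists of all analytic functions $f$ on $\mathbb{D}$ with $f(0)=0$, $f'(0)=1$ satisfying $\left|\frac{zf'(z)}{f(z)}-1\right|<1$ for all $z\in\mathbb{D}$ (such $f$ are univalent and starlike, so $f(z)/z$ is nonvanishing and $\log(f(z)/z)$ is taken as the branch vanishing at $0$). In terms of the coefficients, $\gamma_1\gamma_3-\gamma_2^2=\frac14\left(a_2a_4-a_3^2+\frac1{12}a_2^4\right)$; the quantity $\gamma_1\gamma_3-\gamma_2^2$ is called the second Hankel determinant of logarithmic coefficients, $H_{2,1}(\mathrm{F}_f/2)$. *)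

From Stdlib Require Import Reals Factorial.
From Coquelicot Require Import Coquelicot.
Open Scope R_scope.

Definition in_disk (z : C) : Prop := Cmod z < 1.

(* Analytic on D: given by a power series centred at 0 converging on all of D
   (for the disk this is equivalent to holomorphy on D, by Taylor's theorem). *)
Definition analytic_on_disk (f : C -> C) : Prop :=
  exists a : nat -> C, forall z, in_disk z ->
    is_pseries (K := C_AbsRing) (V := C_NormedModule) a z (f z).

Definition is_cexp (w e : C) : Prop :=
  is_pseries (K := C_AbsRing) (V := C_NormedModule)
    (fun k => RtoC (/ INR (Stdlib.Arith.Factorial.fact k))) w e.

Definition Su_star (f : C -> C) : Prop :=
  analytic_on_disk f /\ f (RtoC 0) = RtoC 0 /\
  is_derive (K := C_AbsRing) (V := C_NormedModule) f (RtoC 0) (RtoC 1) /\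
  forall z, in_disk z -> z <> RtoC 0 ->
    f z <> RtoC 0 /\
    exists f'z : C, is_derive (K := C_AbsRing) (V := C_NormedModule) f z f'z /\
      Cmod ((z * f'z / f z - 1)%C) < 1.

(* gam is the sequence of logarithmic coefficients of f:
   log (f z / z) = 2 * sum_{n>=1} gam n z^n on D, the branch of the logarithm
   vanishing at 0 (gam 0 = 0 encodes the sum starting at n = 1). *)
Definition log_coeffs (f : C -> C) (gam : nat -> C) : Prop :=
  gam 0%nat = RtoC 0 /\
  forall z, in_disk z -> exists L E : C,
    is_pseries (K := C_AbsRing) (V := C_NormedModule) gam z L /\
    is_cexp (2 * L)%C E /\ (E * z)%C = f z.

Definition H21 (gam : nat -> C) : C :=
  (gam 1%nat * gam 3%nat - gam 2%nat * gam 2%nat)%C.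

(* For f in S_u^*, write f(z) = z exp(2 L(z)) with L(z) = sum gamma_n z^n.  Then
   z f'(z)/f(z) - 1 = 2 z L'(z) = sum 2 n gamma_n z^n has modulus < 1 on the disk, so
   Bessel's inequality gives 4|gamma_1|^2 + 16|gamma_2|^2 + 36|gamma_3|^2 <= 1, and
   AM-GM turns this into |gamma_1 gamma_3| + |gamma_2|^2 <= 1/16.  Bessel's inequality
   is proved without integration: for a polynomial P of degree <= M, averaging
   |P(r w^k)|^2 over the (M+1)-st roots of unity w^k gives sum |c_n|^2 r^(2n) exactly,
   and the tails of the series are absorbed by letting M -> oo and then r -> 1.
   Equality holds for f(z) = z exp(z^2/2), whose only nonzero logarithmic coefficient
   is gamma_2 = 1/4. *)

From Stdlib Require Import Reals Factorial Lia Psatz ClassicalEpsilon.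
From Coquelicot Require Import Coquelicot.
Open Scope R_scope.

Notation is_Cseries := (is_series (K := C_AbsRing) (V := C_NormedModule)).
Notation is_Cpseries := (is_pseries (K := C_AbsRing) (V := C_NormedModule)).
Notation is_Cderive := (is_derive (K := C_AbsRing) (V := C_NormedModule)).

Lemma sum_n_CSn (f : nat -> C) n : sum_n f (S n) = (sum_n f n + f (S n))%C.
Proof. exact (sum_Sn (G := C_AbelianMonoid) f n). Qed.

Lemma sum_n_Cext (f g : nat -> C) n :
  (forall k, (k <= n)%nat -> f k = g k) -> sum_n f n = sum_n g n.
Proof. apply sum_n_ext_loc. Qed.

Lemma sum_n_Cmult_l (c : C) f n : sum_n (fun k => c * f k)%C n = (c * sum_n f n)%C.
Proof. exact (sum_n_mult_l (K := C_Ring) c f n). Qed.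

Lemma sum_n_Cmult_r (c : C) f n : sum_n (fun k => f k * c)%C n = (sum_n f n * c)%C.
Proof. exact (sum_n_mult_r (K := C_Ring) c f n). Qed.

Lemma sum_n_Cconj (f : nat -> C) n : Cconj (sum_n f n) = sum_n (fun k => Cconj (f k)) n.
Proof.
  induction n; [now rewrite !sum_O|]. rewrite !sum_Sn, <- IHn. apply Cplus_conj.
Qed.

Lemma sum_n_RtoC (g : nat -> R) n : RtoC (sum_n g n) = sum_n (fun k => RtoC (g k)) n.
Proof.
  induction n; [now rewrite !sum_O|]. rewrite !sum_Sn, <- IHn. apply RtoC_plus.
Qed.

Lemma sum_n_Cgeom (q : C) n : ((1 - q) * sum_n (fun k => q ^ k) n = 1 - q ^ S n)%C.
Proof.
  induction n.
  - rewrite sum_O. simpl. ring.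
  - rewrite sum_n_CSn, Cmult_plus_distr_l, IHn. simpl. ring.
Qed.

Lemma sum_n_Cdelta (c : C) i n :
  (i <= n)%nat -> sum_n (fun j => if Nat.eq_dec i j then c else RtoC 0) n = c.
Proof.
  intros Hi. induction n.
  - rewrite sum_O. destruct (Nat.eq_dec i 0); [reflexivity|lia].
  - rewrite sum_n_CSn.
    destruct (Nat.eq_dec i (S n)) as [->|Hne].
    + rewrite (sum_n_ext_loc _ (fun k => RtoC 0 * RtoC 0)%C).
      * rewrite sum_n_Cmult_l, Cmult_0_l. apply Cplus_0_l.
      * intros k Hk. destruct (Nat.eq_dec (S n) k); [lia|symmetry; apply Cmult_0_l].
    + rewrite IHn by lia. apply Cplus_0_r.
Qed.

Lemma RtoC_neq_0 (x : R) : x <> 0 -> RtoC x <> RtoC 0.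
Proof. intros Hx E. apply Hx. now injection E. Qed.

Lemma pow_n_Cpow (z : C) n : pow_n (K := C_AbsRing) z n = (z ^ n)%C.
Proof. induction n; simpl; auto. Qed.

Lemma is_Cpseries_series a z l : is_Cpseries a z l <-> is_Cseries (fun n => z ^ n * a n)%C l.
Proof.
  split; intros H; (eapply is_series_ext; [|exact H]); intros n; now rewrite pow_n_Cpow.
Qed.

Lemma is_Cseries_unique a l1 l2 : is_Cseries a l1 -> is_Cseries a l2 -> l1 = l2.
Proof. exact (filterlim_locally_unique _ _ _). Qed.

Lemma is_Cseries_ext (a b : nat -> C) l : (forall n, a n = b n) -> is_Cseries a l -> is_Cseries b l.
Proof. apply is_series_ext. Qed.

Lemma is_Cseries_scal c a l : is_Cseries a l -> is_Cseries (fun n => c * a n)%C (c * l)%C.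
Proof. exact (is_series_scal_l c a l). Qed.

Lemma is_Cseries_abs a : ex_series (fun n => Cmod (a n)) -> exists l, is_Cseries a l.
Proof.
  intros H.
  destruct (ex_series_le (K := C_AbsRing) (V := C_CompleteNormedModule) a _
              (fun n => Rle_refl _) H) as [l Hl].
  now exists l.
Qed.

Lemma is_series_finite {K : AbsRing} {V : NormedModule K} (b : nat -> V) N :
  (forall n, (N < n)%nat -> b n = zero) -> is_series b (sum_n b N).
Proof.
  intros Hb P HP. exists N. intros n Hn. apply locally_singleton in HP.
  induction Hn; [exact HP|]. rewrite sum_Sn, Hb, plus_zero_r by lia. exact IHHn.
Qed.

Lemma Cmod_sum_n_le (a : nat -> C) (b : nat -> R) n :
  (forall k, Cmod (a k) <= b k) -> Cmod (sum_n a n) <= sum_n b n.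
Proof.
  intros Hab. induction n.
  - rewrite !sum_O. apply Hab.
  - rewrite !sum_Sn. eapply Rle_trans; [apply Cmod_triangle|].
    specialize (Hab (S n)). change (plus ?x ?y) with (x + y). lra.
Qed.

Lemma sum_n_le_add (b : nat -> R) n m : (forall k, 0 <= b k) -> sum_n b n <= sum_n b (m + n).
Proof.
  intros Hb. induction m; [apply Rle_refl|].
  rewrite Nat.add_succ_l, sum_Sn. specialize (Hb (S (m + n))).
  change (plus ?x ?y) with (x + y). lra.
Qed.

Lemma sum_n_le_series (b : nat -> R) B n :
  (forall k, 0 <= b k) -> is_series b B -> sum_n b n <= B.
Proof.
  intros Hb HB.
  exact (is_lim_seq_le (fun _ => sum_n b n) (fun m => sum_n b (m + n)) _ _
           (fun m => sum_n_le_add b n m Hb)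
           (is_lim_seq_const _) (proj1 (is_lim_seq_incr_n (sum_n b) n B) HB)).
Qed.

Lemma is_Cseries_Cmod_le a l (b : nat -> R) B :
  (forall n, Cmod (a n) <= b n) -> is_series b B -> is_Cseries a l -> Cmod l <= B.
Proof.
  intros Hab HB Ha.
  assert (Hb0 : forall n, 0 <= b n)
    by (intros n; eapply Rle_trans; [apply Cmod_ge_0|apply Hab]).
  assert (Hl : is_lim_seq (fun n => Cmod (sum_n a n)) (Cmod l))
    by exact (filterlim_comp _ _ _ (sum_n a) norm _ _ _ Ha
                (filterlim_norm (V := C_NormedModule) l)).
  refine (is_lim_seq_le _ (fun _ => B) _ _ _ Hl (is_lim_seq_const B)).
  intros n. eapply Rle_trans; [apply (Cmod_sum_n_le a b n Hab)|now apply sum_n_le_series].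
Qed.

Lemma is_Cseries_tail_le (a : nat -> C) (l : C) (A : R) M :
  is_Cseries a l -> is_series (fun n => Cmod (a n)) A ->
  Cmod (l - sum_n a M)%C <= A - sum_n (fun n => Cmod (a n)) M.
Proof.
  intros Ha HA.
  assert (Ht : is_Cseries (fun k => a (S M + k)%nat) (l - sum_n a M)%C).
  { apply (is_series_incr_n a (S M)); [lia|].
    replace (plus _ _) with l; [exact Ha|]. simpl pred.
    change (l = l - sum_n a M + sum_n a M)%C. ring. }
  assert (HAt : is_series (fun k => Cmod (a (S M + k)%nat)) (A - sum_n (fun n => Cmod (a n)) M)).
  { apply (is_series_incr_n (fun n => Cmod (a n)) (S M)); [lia|].
    replace (plus _ _) with A; [exact HA|]. simpl pred.
    change (A = A - sum_n (fun n => Cmod (a n)) M + sum_n (fun n => Cmod (a n)) M). ring. }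
  exact (is_Cseries_Cmod_le _ _ _ _ (fun n => Rle_refl _) HAt Ht).
Qed.

Lemma is_Cseries_terms_bounded (a : nat -> C) l :
  is_Cseries a l -> exists M, forall n, Cmod (a n) <= M.
Proof.
  intros Ha. destruct (filterlim_bounded (sum_n a) (ex_intro _ l Ha)) as [M HM].
  assert (HM0 := HM 0%nat). rewrite sum_O in HM0. change (Cmod (a 0%nat) <= M) in HM0.
  exists (M + M). intros [|n].
  - pose proof (Cmod_ge_0 (a 0%nat)). lra.
  - replace (a (S n)) with (sum_n a (S n) - sum_n a n)%C by (rewrite sum_n_CSn; ring).
    eapply Rle_trans; [apply Cmod_triangle|]. rewrite Cmod_opp.
    exact (Rplus_le_compat _ _ _ _ (HM (S n)) (HM n)).
Qed.

Lemma filterlim_div2 : filterlim Nat.div2 eventually eventually.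
Proof.
  intros P [N HN]. exists (2 * N)%nat. intros n Hn. apply HN, Nat.div2_le_lower_bound, Hn.
Qed.

Lemma is_series_even_terms {K : AbsRing} {V : NormedModule K} (u w : nat -> V) l :
  (forall k, w (2 * k)%nat = u k) -> (forall k, w (S (2 * k)) = zero) ->
  is_series u l -> is_series w l.
Proof.
  intros Heven Hodd Hu.
  assert (Hpair : forall k, sum_n w (2 * k) = sum_n u k /\ sum_n w (S (2 * k)) = sum_n u k).
  { assert (Hodd' : forall k, sum_n w (S (2 * k)) = sum_n w (2 * k))
      by (intros k; now rewrite sum_Sn, Hodd, plus_zero_r).
    induction k as [|k [IH _]].
    - rewrite Hodd'. change (2 * 0)%nat with 0%nat. rewrite !sum_O.
      split; exact (Heven 0%nat).
    - assert (Hk : sum_n w (2 * S k) = sum_n u (S k)).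
      { replace (2 * S k)%nat with (S (S (2 * k))) by lia.
        rewrite sum_Sn, Hodd', IH, sum_Sn. f_equal.
        replace (S (S (2 * k))) with (2 * S k)%nat by lia. apply Heven. }
      split; [exact Hk|]. now rewrite Hodd'. }
  assert (Hsum : forall n, sum_n w n = sum_n u (Nat.div2 n)).
  { intros n. destruct (Nat.Even_or_Odd n) as [[k ->]|[k ->]].
    - rewrite Nat.div2_double. apply Hpair.
    - rewrite Nat.add_1_r, Nat.div2_succ_double. apply Hpair. }
  unfold is_series.
  apply (filterlim_ext (fun n => sum_n u (Nat.div2 n))); [intros n; now rewrite Hsum|].
  exact (filterlim_comp _ _ _ Nat.div2 (sum_n u) _ _ _ filterlim_div2 Hu).
Qed.

(* Coquelicot's product and chain rules view C as a module over itself, whose uniform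
   structure differs from that of [C_NormedModule]; the derivatives nevertheless agree. *)
Lemma is_Cderive_ring F z D :
  is_Cderive F z D <-> is_derive (K := C_AbsRing) (V := AbsRing_NormedModule C_AbsRing) F z D.
Proof. split; intros [_ Hd]; split; try apply is_linear_scal_l; exact Hd. Qed.

Lemma is_Cderive_of_eps F z D :
  (forall eps, 0 < eps -> exists del, 0 < del /\
     forall h, Cmod h < del -> Cmod (F (z + h) - F z - h * D)%C <= eps * Cmod h) ->
  is_Cderive F z D.
Proof.
  intros H. split; [apply is_linear_scal_l|].
  intros x Hx. apply (is_filter_lim_locally_unique (V := AbsRing_NormedModule C_AbsRing)) in Hx.
  subst x.
  intros [eps Heps]. destruct (H eps Heps) as [del [Hdel Hd]].
  exists (mkposreal del Hdel). intros y Hy. change C in y. change (Cmod (y - z) < del) in Hy.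
  specialize (Hd (y - z)%C Hy). replace (z + (y - z))%C with y in Hd by ring.
  exact Hd.
Qed.

Lemma is_Cderive_unique F z D1 D2 : is_Cderive F z D1 -> is_Cderive F z D2 -> D1 = D2.
Proof.
  intros H1 H2. now rewrite <- (is_C_derive_unique F z D1 H1), (is_C_derive_unique F z D2 H2).
Qed.

Lemma is_Cderive_id z : is_Cderive (fun t => t) z (RtoC 1).
Proof. apply is_Cderive_ring, (is_derive_id (K := C_AbsRing)). Qed.

Lemma is_Cderive_const (c : C) z : is_Cderive (fun _ => c) z (RtoC 0).
Proof. exact (is_derive_const (K := C_AbsRing) (V := C_NormedModule) c z). Qed.

Lemma is_Cderive_mult f g z df dg :
  is_Cderive f z df -> is_Cderive g z dg ->
  is_Cderive (fun t => f t * g t)%C z (df * g z + f z * dg)%C.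
Proof.
  intros Hf Hg. apply is_Cderive_ring in Hf, Hg. apply is_Cderive_ring.
  exact (is_derive_mult f g z df dg Hf Hg Cmult_comm).
Qed.

Lemma is_Cderive_comp f g z df dg :
  is_Cderive f (g z) df -> is_Cderive g z dg -> is_Cderive (fun t => f (g t)) z (dg * df)%C.
Proof. intros Hf Hg. apply is_Cderive_ring in Hg. exact (is_derive_comp f g z df dg Hf Hg). Qed.

Lemma is_Cderive_ext_disk f g z D :
  (forall t, in_disk t -> f t = g t) -> in_disk z -> is_Cderive f z D -> is_Cderive g z D.
Proof.
  intros Hfg Hz. apply is_derive_ext_loc.
  assert (Hr : 0 < 1 - Cmod z) by (unfold in_disk in Hz; lra).
  exists (mkposreal _ Hr). intros t Ht. change C in t. change (Cmod (t - z) < 1 - Cmod z) in Ht.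
  apply Hfg. unfold in_disk. replace t with (z + (t - z))%C by ring.
  eapply Rle_lt_trans; [apply Cmod_triangle|]. simpl in Ht. lra.
Qed.

(** * Termwise differentiation of power series *)

(* (n+1)^2 <= (n+1)(n+2), the coefficients of the second derivative of the geometric series. *)
Lemma ex_series_sq_geom q : 0 <= q < 1 -> ex_series (fun n => (INR n + 1) ^ 2 * q ^ n).
Proof.
  intros Hq.
  set (b := PS_derive (PS_derive (fun _ : nat => 1))).
  assert (Hb : ex_pseries b q).
  { apply CV_radius_inside. unfold b. rewrite !CV_radius_derive.
    rewrite (CV_radius_finite_DAlembert _ 1 (fun _ => R1_neq_R0) Rlt_0_1).
    - rewrite Rinv_1, Rabs_pos_eq by lra. simpl. lra.
    - apply (is_lim_seq_ext (fun _ => 1)); [|apply is_lim_seq_const].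
      intros n. rewrite Rdiv_1_r. symmetry. apply Rabs_R1. }
  refine (ex_series_le (K := R_AbsRing) (V := R_CompleteNormedModule) _ _ _ Hb).
  intros n. change norm with Rabs. change (scal (pow_n q n) (b n)) with (pow_n q n * b n).
  replace (pow_n q n) with (q ^ n) by (induction n; simpl; [reflexivity|now rewrite IHn]).
  unfold b, PS_derive. rewrite !S_INR.
  assert (0 <= q ^ n) by (apply pow_le; lra). pose proof (pos_INR n).
  rewrite Rabs_pos_eq by (apply Rmult_le_pos; nra).
  rewrite Rmult_comm. apply Rmult_le_compat_l; nra.
Qed.

Lemma ex_series_weighted_Cpseries a rho l s :
  0 < rho -> is_Cpseries a (RtoC rho) l -> 0 <= s < rho ->
  ex_series (fun n => (INR n + 1) ^ 2 * (Cmod (a n) * s ^ n)).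
Proof.
  intros Hrho Ha Hs. apply is_Cpseries_series, is_Cseries_terms_bounded in Ha.
  destruct Ha as [M HM].
  apply (ex_series_le (K := R_AbsRing) (V := R_CompleteNormedModule) _
           (fun n => M * ((INR n + 1) ^ 2 * (s / rho) ^ n))).
  - intros n. change norm with Rabs.
    assert (Hq : 0 <= (s / rho) ^ n) by (apply pow_le; apply Rdiv_le_0_compat; lra).
    assert (Hn : 0 <= (INR n + 1) ^ 2) by apply pow2_ge_0.
    assert (Hrn : 0 < rho ^ n) by (apply pow_lt; lra).
    assert (Hsn : 0 <= s ^ n) by (apply pow_le; lra).
    assert (Han := HM n). rewrite Cmod_mult, Cmod_pow, Cmod_R, (Rabs_pos_eq rho) in Han by lra.
    pose proof (Cmod_ge_0 (a n)).
    rewrite Rabs_pos_eq by (apply Rmult_le_pos; nra).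
    replace (s ^ n) with (rho ^ n * (s / rho) ^ n)
      by (rewrite <- Rpow_mult_distr; f_equal; field; lra).
    assert (0 <= (M - rho ^ n * Cmod (a n)) * ((INR n + 1) ^ 2 * (s / rho) ^ n))
      by (apply Rmult_le_pos; nra).
    nra.
  - apply (ex_series_scal_l (K := R_AbsRing) (V := R_NormedModule)), ex_series_sq_geom.
    split; [apply Rdiv_le_0_compat; lra|]. apply (Rdiv_lt_1 s rho Hrho); lra.
Qed.

Lemma Cpow_remainder_S (z h : C) n :
  ((z + h) ^ S n - z ^ S n - INR (S n) * h * z ^ n =
   (z + h) * ((z + h) ^ n - z ^ n - INR n * h * z ^ pred n) + INR n * h * h * z ^ pred n)%C.
Proof.
  destruct n as [|m]; [simpl; ring|]. rewrite (S_INR (S m)), RtoC_plus. simpl pred. simpl; ring.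
Qed.

(* Multiplied by s^2 so that no negative power s^(n-2) appears for n < 2. *)
Lemma Cpow_remainder_bound (z h : C) s n :
  0 < s -> Cmod z <= s -> Cmod (z + h) <= s ->
  s ^ 2 * Cmod ((z + h) ^ n - z ^ n - INR n * h * z ^ pred n)%C <= INR n ^ 2 * s ^ n * Cmod h ^ 2.
Proof.
  intros Hs Hz Hzh. induction n as [|n IH].
  - replace ((z + h) ^ 0 - z ^ 0 - INR 0 * h * z ^ pred 0)%C with (RtoC 0) by (simpl; ring).
    rewrite Cmod_0. simpl. lra.
  - rewrite Cpow_remainder_S.
    set (Dn := ((z + h) ^ n - z ^ n - INR n * h * z ^ pred n)%C) in *.
    assert (Hzn : INR n * (s ^ 2 * Cmod z ^ pred n) <= INR n * s ^ S n).
    { destruct n as [|m]; [simpl; lra|]. apply Rmult_le_compat_l; [apply pos_INR|].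
      simpl pred. replace (s ^ S (S m)) with (s ^ 2 * s ^ m) by (simpl; ring).
      apply Rmult_le_compat_l; [apply pow2_ge_0|]. apply pow_incr. split; [apply Cmod_ge_0|lra]. }
    assert (Htri : Cmod ((z + h) * Dn + INR n * h * h * z ^ pred n)%C
                   <= s * Cmod Dn + INR n * Cmod h ^ 2 * Cmod z ^ pred n).
    { eapply Rle_trans; [apply Cmod_triangle|].
      rewrite !Cmod_mult, Cmod_R, Cmod_pow, Rabs_pos_eq by apply pos_INR.
      pose proof (Cmod_ge_0 Dn). simpl. nra. }
    pose proof (pos_INR n). pose proof (pow2_ge_0 (Cmod h)).
    assert (0 <= s ^ S n * Cmod h ^ 2) by (apply Rmult_le_pos; [apply pow_le; lra|lra]).
    apply Rle_trans with (s * (s ^ 2 * Cmod Dn) + Cmod h ^ 2 * (INR n * (s ^ 2 * Cmod z ^ pred n))).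
    { apply Rle_trans with (s ^ 2 * (s * Cmod Dn + INR n * Cmod h ^ 2 * Cmod z ^ pred n)).
      - apply Rmult_le_compat_l; [apply pow2_ge_0|exact Htri].
      - right; ring. }
    apply Rle_trans with (s * (INR n ^ 2 * s ^ n * Cmod h ^ 2) + Cmod h ^ 2 * (INR n * s ^ S n)).
    { apply Rplus_le_compat; [apply Rmult_le_compat_l; lra|apply Rmult_le_compat_l; lra]. }
    rewrite S_INR.
    replace (s * (INR n ^ 2 * s ^ n * Cmod h ^ 2) + Cmod h ^ 2 * (INR n * s ^ S n))
      with ((INR n ^ 2 + INR n) * (s ^ S n * Cmod h ^ 2)) by (simpl; ring).
    replace ((INR n + 1) ^ 2 * s ^ S n * Cmod h ^ 2)
      with ((INR n + 1) ^ 2 * (s ^ S n * Cmod h ^ 2)) by ring.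
    apply Rmult_le_compat_r; nra.
Qed.

Lemma Cpseries_remainder_bound a z h s l0 l1 D SG :
  0 < s -> Cmod z <= s -> Cmod (z + h) <= s ->
  is_Cpseries a z l0 -> is_Cpseries a (z + h)%C l1 ->
  is_Cseries (fun n => INR n * a n * z ^ pred n)%C D ->
  is_series (fun n => (INR n + 1) ^ 2 * (Cmod (a n) * s ^ n)) SG ->
  s ^ 2 * Cmod (l1 - l0 - h * D)%C <= SG * Cmod h ^ 2.
Proof.
  intros Hs Hz Hzh H0 H1 HD HSG. apply is_Cpseries_series in H0, H1.
  assert (Hs2 : 0 < s ^ 2) by (apply pow_lt; lra).
  assert (Hdiff := is_series_minus _ _ _ _ (is_series_minus _ _ _ _ H1 H0)
                                   (is_Cseries_scal h _ _ HD)).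
  assert (Hterm : forall n,
    Cmod (((z + h) ^ n * a n - z ^ n * a n) - h * (INR n * a n * z ^ pred n))%C
    <= (Cmod h ^ 2 / s ^ 2) * ((INR n + 1) ^ 2 * (Cmod (a n) * s ^ n))).
  { intros n.
    replace (((z + h) ^ n * a n - z ^ n * a n) - h * (INR n * a n * z ^ pred n))%C
      with (a n * ((z + h) ^ n - z ^ n - INR n * h * z ^ pred n))%C by ring.
    rewrite Cmod_mult.
    pose proof (Cpow_remainder_bound z h s n Hs Hz Hzh) as Hrem.
    pose proof (Cmod_ge_0 (a n)). pose proof (pos_INR n).
    assert (0 <= s ^ n * Cmod h ^ 2) by (apply Rmult_le_pos; [apply pow_le; lra|apply pow2_ge_0]).
    apply (Rmult_le_reg_l (s ^ 2)); [lra|].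
    replace (s ^ 2 * (Cmod h ^ 2 / s ^ 2 * ((INR n + 1) ^ 2 * (Cmod (a n) * s ^ n))))
      with (Cmod (a n) * ((INR n + 1) ^ 2 * (s ^ n * Cmod h ^ 2))) by (field; lra).
    rewrite <- Rmult_assoc, (Rmult_comm (s ^ 2)), Rmult_assoc.
    apply Rmult_le_compat_l; [lra|]. eapply Rle_trans; [exact Hrem|].
    rewrite Rmult_assoc. apply Rmult_le_compat_r; nra. }
  pose proof (is_Cseries_Cmod_le _ _ _ _ Hterm
                (is_series_scal_l (K := R_AbsRing) (V := R_NormedModule) _ _ _ HSG) Hdiff) as Hle.
  change (scal ?c ?x) with (c * x) in Hle.
  apply (Rmult_le_compat_l (s ^ 2)) in Hle; [|lra].
  replace (s ^ 2 * (Cmod h ^ 2 / s ^ 2 * SG)) with (SG * Cmod h ^ 2) in Hle by (field; lra).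
  replace (l1 - l0 - h * D)%C with (minus (minus l1 l0) (scal h D)) by reflexivity.
  exact Hle.
Qed.

Lemma Cmod_Cpseries_derive_term_le a z s n : 0 < s -> Cmod z <= s ->
  Cmod (INR n * a n * z ^ pred n)%C <= / s * ((INR n + 1) ^ 2 * (Cmod (a n) * s ^ n)).
Proof.
  intros Hs Hz. pose proof (Cmod_ge_0 (a n)).
  rewrite !Cmod_mult, Cmod_R, Cmod_pow, Rabs_pos_eq by apply pos_INR.
  apply (Rmult_le_reg_l s); [lra|]. rewrite <- (Rmult_assoc s (/ s)), Rinv_r, Rmult_1_l by lra.
  destruct n as [|m]; [simpl; nra|].
  simpl pred. rewrite S_INR. pose proof (pos_INR m).
  assert (Hzm : s * Cmod z ^ m <= s ^ S m)
    by (apply Rmult_le_compat_l; [lra|apply pow_incr; split; [apply Cmod_ge_0|lra]]).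
  pose proof (pow_le (Cmod z) m (Cmod_ge_0 z)).
  assert (0 <= Cmod (a (S m)) * (s ^ S m - s * Cmod z ^ m)) by (apply Rmult_le_pos; lra).
  assert (0 <= Cmod (a (S m)) * s ^ S m) by (apply Rmult_le_pos; [lra|apply pow_le; lra]).
  nra.
Qed.

Lemma is_Cderive_Cpseries a F rad z :
  (forall w, Cmod w < rad -> is_Cpseries a w (F w)) -> Cmod z < rad ->
  exists D, is_Cseries (fun n => INR n * a n * z ^ pred n)%C D /\ is_Cderive F z D.
Proof.
  intros HF Hz. pose proof (Cmod_ge_0 z) as Hz0.
  set (rho := (Cmod z + rad) / 2). set (s := (Cmod z + rho) / 2).
  assert (Hs : 0 < s) by (unfold s, rho; lra).
  assert (Hrho : is_Cpseries a (RtoC rho) (F (RtoC rho)))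
    by (apply HF; rewrite Cmod_R, Rabs_pos_eq; unfold rho; lra).
  set (G := fun n => (INR n + 1) ^ 2 * (Cmod (a n) * s ^ n)).
  destruct (ex_series_weighted_Cpseries a rho _ s ltac:(unfold rho; lra) Hrho
              ltac:(unfold s, rho; lra)) as [SG HSG]. fold G in HSG.
  assert (HG0 : forall n, 0 <= G n).
  { intros n. apply Rmult_le_pos; [apply pow2_ge_0|].
    apply Rmult_le_pos; [apply Cmod_ge_0|apply pow_le; lra]. }
  assert (HSG0 : 0 <= SG)
    by (eapply Rle_trans; [apply (HG0 0%nat)|rewrite <- sum_O; now apply sum_n_le_series]).
  destruct (is_Cseries_abs (fun n => INR n * a n * z ^ pred n)%C) as [D HD].
  { apply (ex_series_le (K := R_AbsRing) (V := R_CompleteNormedModule) _ (fun n => / s * G n)).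
    - intros n. change norm with Rabs. rewrite Rabs_pos_eq by apply Cmod_ge_0.
      apply Cmod_Cpseries_derive_term_le; unfold s, rho; lra.
    - apply (ex_series_scal_l (K := R_AbsRing) (V := R_NormedModule)). now exists SG. }
  exists D. split; [exact HD|].
  apply is_Cderive_of_eps. intros eps Heps.
  assert (Hs2 : 0 < s ^ 2) by (apply pow_lt; lra).
  exists (Rmin (s - Cmod z) (eps * s ^ 2 / (SG + 1))).
  split; [apply Rmin_case; [unfold s, rho; lra|apply Rdiv_lt_0_compat; nra]|].
  intros h Hh. pose proof (Cmod_ge_0 h).
  assert (Hzh : Cmod (z + h) <= s).
  { eapply Rle_trans; [apply Cmod_triangle|].
    assert (Cmod h < s - Cmod z) by (eapply Rlt_le_trans; [exact Hh|apply Rmin_l]). lra. }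
  assert (Hh2 : (SG + 1) * Cmod h <= eps * s ^ 2).
  { replace (eps * s ^ 2) with ((SG + 1) * (eps * s ^ 2 / (SG + 1))) by (field; lra).
    apply Rmult_le_compat_l; [lra|]. eapply Rle_trans; [apply Rlt_le, Hh|apply Rmin_r]. }
  pose proof (Cpseries_remainder_bound a z h s _ _ D SG Hs ltac:(unfold s, rho; lra) Hzh
                (HF z Hz) (HF (z + h)%C ltac:(unfold s, rho in Hzh; lra)) HD HSG) as Hrem.
  apply (Rmult_le_reg_l (s ^ 2)); [lra|]. nra.
Qed.

(* An unspecified value where the series diverges. *)
Definition CPSeries (a : nat -> C) (z : C) : C := epsilon (inhabits (RtoC 0)) (is_Cpseries a z).

Lemma CPSeries_correct a z : (exists l, is_Cpseries a z l) -> is_Cpseries a z (CPSeries a z).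
Proof. apply epsilon_spec. Qed.

Definition Cexp_coeff (k : nat) : C := RtoC (/ INR (fact k)).

Definition Cexp (u : C) : C := CPSeries Cexp_coeff u.

Lemma Cmod_Cexp_coeff_term u n :
  Cmod (u ^ n * Cexp_coeff n)%C = Cmod u ^ n * / INR (fact n).
Proof.
  unfold Cexp_coeff. rewrite Cmod_mult, Cmod_pow, Cmod_R, Rabs_pos_eq; [reflexivity|].
  apply Rlt_le, Rinv_0_lt_compat, lt_0_INR, lt_O_fact.
Qed.

Lemma is_cexp_Cexp u : is_cexp u (Cexp u).
Proof.
  apply CPSeries_correct.
  destruct (is_Cseries_abs (fun n => u ^ n * Cexp_coeff n)%C) as [l Hl].
  - exists (exp (Cmod u)). pose proof (is_exp_Reals (Cmod u)) as He.
    eapply is_series_ext; [|exact He]. intros n. rewrite Cmod_Cexp_coeff_term.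
    change (scal (pow_n (Cmod u) n) (/ INR (fact n))) with (pow_n (Cmod u) n * / INR (fact n)).
    now rewrite pow_n_pow.
  - exists l. now apply is_Cpseries_series.
Qed.

Lemma is_cexp_unique u E : is_cexp u E -> E = Cexp u.
Proof.
  intros H. pose proof (is_cexp_Cexp u) as HC. unfold is_cexp in H, HC.
  apply is_Cpseries_series in H, HC. exact (is_Cseries_unique _ _ _ H HC).
Qed.

Lemma is_Cderive_Cexp u : is_Cderive Cexp u (Cexp u).
Proof.
  destruct (is_Cderive_Cpseries Cexp_coeff Cexp (Cmod u + 1) u (fun w _ => is_cexp_Cexp w)
              ltac:(lra)) as [D [HD HdD]]. change C in D.
  replace (Cexp u) with D; [exact HdD|].
  assert (HD1 : is_Cseries (fun n => INR (S n) * Cexp_coeff (S n) * u ^ n)%C D).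
  { apply (is_series_incr_1 (fun n => INR n * Cexp_coeff n * u ^ pred n)%C).
    replace (plus D _) with D; [exact HD|]. change (D = D + 0 * Cexp_coeff 0 * 1)%C. ring. }
  pose proof (proj1 (is_Cpseries_series _ _ _) (is_cexp_Cexp u)) as HC.
  apply (is_Cseries_unique _ _ _ HD1). eapply is_series_ext; [|exact HC].
  intros n. change (u ^ n * Cexp_coeff n = INR (S n) * Cexp_coeff (S n) * u ^ n)%C.
  unfold Cexp_coeff.
  assert (Hn : INR (S n) <> 0) by (apply not_0_INR; lia).
  rewrite fact_simpl, mult_INR, Rinv_mult, RtoC_mult, (RtoC_inv (INR (S n))) by exact Hn.
  field. now apply RtoC_neq_0.
Qed.

Lemma Cmod_Cexp_sub_1 u : Cmod (Cexp u - 1) <= exp (Cmod u) - 1.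
Proof.
  pose proof (proj1 (is_Cpseries_series _ _ _) (is_cexp_Cexp u)) as HC.
  assert (HC1 : is_Cseries (fun n => u ^ S n * Cexp_coeff (S n))%C (Cexp u - 1)%C).
  { apply (is_series_incr_1 (fun n => u ^ n * Cexp_coeff n)%C).
    replace (plus _ _) with (Cexp u); [exact HC|].
    unfold Cexp_coeff. simpl. rewrite Rinv_1. change (Cexp u = Cexp u - 1 + 1 * 1)%C. ring. }
  pose proof (is_exp_Reals (Cmod u)) as HR.
  assert (HR1 : is_series (fun n => Cmod u ^ S n * / INR (fact (S n))) (exp (Cmod u) - 1)).
  { apply (is_series_incr_1 (fun n => Cmod u ^ n * / INR (fact n))).
    replace (plus _ _) with (exp (Cmod u)).
    - eapply is_series_ext; [|exact HR]. intros n. now rewrite <- pow_n_pow.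
    - simpl. rewrite Rinv_1. change (exp (Cmod u) = exp (Cmod u) - 1 + 1 * 1). ring. }
  refine (is_Cseries_Cmod_le _ _ _ _ _ HR1 HC1).
  intros n. rewrite Cmod_Cexp_coeff_term. apply Rle_refl.
Qed.

Lemma Cexp_0 : Cexp (RtoC 0) = RtoC 1.
Proof.
  pose proof (Cmod_Cexp_sub_1 (RtoC 0)) as H. rewrite Cmod_0, exp_0, Rminus_diag in H.
  assert (E : (Cexp (RtoC 0) - 1)%C = RtoC 0)
    by (apply Cmod_eq_0; pose proof (Cmod_ge_0 (Cexp (RtoC 0) - 1)); lra).
  replace (Cexp (RtoC 0)) with (Cexp (RtoC 0) - 1 + 1)%C by ring. rewrite E. ring.
Qed.

Lemma Cexp_neq_0 u : Cmod u <= 1 / 2 -> Cexp u <> RtoC 0.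
Proof.
  intros Hu E. pose proof (Cmod_Cexp_sub_1 u) as H.
  rewrite E in H. replace (RtoC 0 - RtoC 1)%C with (- RtoC 1)%C in H by ring.
  rewrite Cmod_opp, Cmod_1 in H.
  assert (Hhalf : exp (1 / 2) * exp (1 / 2) <= 3)
    by (rewrite <- exp_plus; replace (1 / 2 + 1 / 2) with 1 by field; apply exp_le_3).
  assert (exp (Cmod u) <= exp (1 / 2)).
  { destruct (Rle_lt_or_eq_dec _ _ Hu) as [Hlt|Heq];
      [now apply Rlt_le, exp_increasing|rewrite Heq; apply Rle_refl]. }
  pose proof (exp_pos (1 / 2)). nra.
Qed.

(** * Roots of unity and the discrete Parseval identity *)

Definition Croot (n : nat) : C := (cos (2 * PI / INR n), sin (2 * PI / INR n)).

Lemma Croot_pow n k :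
  (Croot n ^ k)%C = (cos (INR k * (2 * PI / INR n)), sin (INR k * (2 * PI / INR n))).
Proof.
  induction k.
  - simpl. rewrite Rmult_0_l, cos_0, sin_0. reflexivity.
  - rewrite Cpow_S, IHk, S_INR, Rmult_plus_distr_r, Rmult_1_l, Rplus_comm.
    unfold Croot, Cmult. simpl. rewrite cos_plus, sin_plus. f_equal; ring.
Qed.

Lemma Cmod_Croot_pow n k : Cmod (Croot n ^ k) = 1.
Proof.
  rewrite Croot_pow. unfold Cmod. simpl fst; simpl snd.
  set (x := INR k * (2 * PI / INR n)). pose proof (sin2_cos2 x) as H. unfold Rsqr in H.
  replace (cos x ^ 2 + sin x ^ 2) with 1 by (simpl; lra). apply sqrt_1.
Qed.

Lemma Cmult_conj_unit (x : C) : Cmod x = 1 -> (x * Cconj x)%C = RtoC 1.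
Proof. intros H. rewrite <- Cmod2_conj, H. simpl. f_equal. ring. Qed.

Lemma Cconj_1 : Cconj (RtoC 1) = RtoC 1.
Proof. unfold Cconj, RtoC. simpl. now rewrite Ropp_0. Qed.

Lemma Croot_pow_self M : (Croot (S M) ^ S M)%C = RtoC 1.
Proof.
  rewrite Croot_pow. replace (INR (S M) * (2 * PI / INR (S M))) with (2 * PI).
  - rewrite cos_2PI, sin_2PI. reflexivity.
  - field. apply not_0_INR. lia.
Qed.

Lemma Croot_pow_neq_1 M j : (0 < j <= M)%nat -> (Croot (S M) ^ j)%C <> RtoC 1.
Proof.
  intros Hj E. rewrite Croot_pow in E. apply (f_equal fst) in E. cbn [fst RtoC] in E.
  set (x := INR j * (2 * PI / INR (S M))) in *.
  assert (Hx : 0 < x / 2 < PI).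
  { assert (0 < INR j < INR (S M)) by (split; [apply lt_0_INR|apply lt_INR]; lia).
    pose proof PI_RGT_0.
    replace (x / 2) with (PI * (INR j / INR (S M))) by (unfold x; field; lra).
    split; [apply Rmult_lt_0_compat; [lra|apply Rdiv_lt_0_compat; lra]|].
    rewrite <- (Rmult_1_r PI) at 2. apply Rmult_lt_compat_l; [lra|].
    apply (Rdiv_lt_1 (INR j) (INR (S M))); lra. }
  pose proof (sin_gt_0 _ (proj1 Hx) (proj2 Hx)).
  pose proof (cos_2a_sin (x / 2)). replace (2 * (x / 2)) with x in * by field. nra.
Qed.

Lemma Croot_pow_conj_sub M a b : (b <= a)%nat ->
  (Croot (S M) ^ a * Cconj (Croot (S M) ^ b))%C = (Croot (S M) ^ (a - b))%C.
Proof.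
  intros Hab. replace a with ((a - b) + b)%nat at 1 by lia.
  rewrite Cpow_add_r, <- Cmult_assoc, Cmult_conj_unit by apply Cmod_Croot_pow. ring.
Qed.

Lemma Croot_orthogonal M a b : (a <= M)%nat -> (b <= M)%nat ->
  sum_n (fun k => (Croot (S M) ^ k) ^ a * Cconj ((Croot (S M) ^ k) ^ b))%C M =
  if Nat.eq_dec a b then RtoC (INR (S M)) else RtoC 0.
Proof.
  intros Ha Hb. set (w := Croot (S M)).
  set (q := (w ^ a * Cconj (w ^ b))%C).
  rewrite (sum_n_ext _ (fun k => q ^ k)%C).
  2: { intros k. unfold q. rewrite Cpow_mult_l, !Cpow_conj, <- !Cpow_mult_r.
       f_equal; f_equal; lia. }
  destruct (Nat.eq_dec a b) as [<-|Hne].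
  - assert (Hq : q = RtoC 1) by apply Cmult_conj_unit, Cmod_Croot_pow.
    rewrite Hq, (sum_n_ext _ (fun _ => RtoC 1)) by apply Cpow_1_l.
    rewrite <- (sum_n_RtoC (fun _ => 1)), sum_n_const, Rmult_1_r. reflexivity.
  - assert (HqS : (q ^ S M)%C = RtoC 1).
    { unfold q. rewrite Cpow_mult_l, Cpow_conj, <- !Cpow_mult_r, (Nat.mul_comm a),
        (Nat.mul_comm b), !Cpow_mult_r, <- Cpow_conj. unfold w. rewrite Croot_pow_self, !Cpow_1_l.
      now rewrite Cconj_1, Cpow_1_l, Cmult_1_l. }
    assert (Hq1 : q <> RtoC 1).
    { destruct (Nat.le_gt_cases b a) as [Hle|Hlt].
      - unfold q, w. rewrite Croot_pow_conj_sub by lia. apply Croot_pow_neq_1. lia.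
      - intros Hq. apply (Croot_pow_neq_1 M (b - a)); [lia|].
        rewrite <- Croot_pow_conj_sub by lia. fold w.
        replace (w ^ b * Cconj (w ^ a))%C with (Cconj q)
          by (unfold q; rewrite Cmult_conj, Cconj_conj; apply Cmult_comm).
        rewrite Hq. apply Cconj_1. }
    assert (Hnz : (1 - q)%C <> RtoC 0) by (apply Cminus_eq_contra; congruence).
    pose proof (sum_n_Cgeom q M) as Hgeom. rewrite HqS in Hgeom.
    change (@eq C (sum_n (fun k => q ^ k)%C M) (RtoC 0)).
    replace (sum_n (fun k => q ^ k)%C M)
      with ((1 - q) * sum_n (fun k => q ^ k)%C M / (1 - q))%C by (field; exact Hnz).
    rewrite Hgeom. field. exact Hnz.
Qed.

Lemma Croot_parseval M (b : nat -> C) :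
  sum_n (fun k => Cmod (sum_n (fun n => b n * (Croot (S M) ^ k) ^ n)%C M) ^ 2) M =
  INR (S M) * sum_n (fun n => Cmod (b n) ^ 2) M.
Proof.
  set (w := Croot (S M)).
  apply RtoC_inj. rewrite RtoC_mult, !sum_n_RtoC.
  rewrite (sum_n_Cext _ (fun k => sum_n (fun n => sum_n (fun m =>
             b n * Cconj (b m) * ((w ^ k) ^ n * Cconj ((w ^ k) ^ m))) M) M)%C).
  2: { intros k _. rewrite Cmod2_conj, sum_n_Cconj, <- sum_n_Cmult_r.
       apply sum_n_Cext. intros n _. rewrite <- sum_n_Cmult_l.
       apply sum_n_Cext. intros m _. rewrite Cmult_conj. ring. }
  rewrite sum_n_switch, <- sum_n_Cmult_l. apply sum_n_Cext. intros n Hn.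
  rewrite sum_n_switch. unfold w.
  rewrite (sum_n_Cext _ (fun m => if Nat.eq_dec n m then (b n * Cconj (b n) * INR (S M))%C
                                  else RtoC 0)).
  - rewrite sum_n_Cdelta by exact Hn. rewrite Cmod2_conj. ring.
  - intros m Hm. rewrite sum_n_Cmult_l, Croot_orthogonal by assumption.
    destruct (Nat.eq_dec n m) as [<-|]; ring.
Qed.

(** * Bessel's inequality for power series bounded by 1 *)

Lemma pow_1_sub_ge x k : 0 <= x <= 1 -> 1 - INR k * x <= (1 - x) ^ k.
Proof.
  intros Hx. induction k; [simpl; lra|].
  rewrite S_INR. simpl. pose proof (pos_INR k).
  assert (0 <= INR k * x * x) by (apply Rmult_le_pos; [apply Rmult_le_pos|]; lra).
  assert ((1 - x) * (1 - INR k * x) <= (1 - x) * (1 - x) ^ k) by (apply Rmult_le_compat_l; lra).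
  nra.
Qed.

Lemma le_1_of_pow_scaled s k : (forall r, 0 < r < 1 -> s * r ^ k <= 1) -> s <= 1.
Proof.
  intros Hs. apply Rnot_lt_le. intros Hgt.
  set (t := 1 - / s).
  assert (Hst : s * t = s - 1) by (unfold t; field; lra).
  assert (Ht : 0 < t < 1).
  { assert (0 < / s) by (apply Rinv_0_lt_compat; lra).
    assert (/ s < 1) by (rewrite <- Rinv_1; apply Rinv_lt_contravar; lra).
    unfold t. lra. }
  pose proof (pos_INR k).
  set (x := t / (2 * (INR k + 1))).
  assert (Hx : x * (2 * (INR k + 1)) = t) by (unfold x; field; lra).
  assert (Hx0 : 0 < x) by (unfold x; apply Rdiv_lt_0_compat; lra).
  pose proof (pow_1_sub_ge x k ltac:(nra)) as Hb.
  specialize (Hs (1 - x) ltac:(nra)).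
  assert (Hsk : s * (1 - INR k * x) <= 1)
    by (eapply Rle_trans; [|exact Hs]; apply Rmult_le_compat_l; lra).
  nra.
Qed.

Section Bessel.

Variable c : nat -> C.
Hypothesis Hc : forall z, 0 < Cmod z < 1 -> exists W, is_Cpseries c z W /\ Cmod W <= 1.

(* Parseval at the points r w^k, where each partial sum is within the tail T of a value of
   modulus at most 1. *)
Lemma Cpseries_partial_sq_le r M A :
  0 < r < 1 -> is_series (fun n => Cmod (c n) * r ^ n) A ->
  sum_n (fun n => Cmod (c n) ^ 2 * r ^ (2 * n)) M
  <= (1 + (A - sum_n (fun n => Cmod (c n) * r ^ n) M)) ^ 2.
Proof.
  intros Hr HA. set (T := A - sum_n (fun n => Cmod (c n) * r ^ n) M).
  set (b := fun n => (c n * RtoC (r ^ n))%C).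
  assert (Hk : forall k, Cmod (sum_n (fun n => b n * (Croot (S M) ^ k) ^ n)%C M) <= 1 + T).
  { intros k. set (z := (RtoC r * Croot (S M) ^ k)%C).
    assert (Hz : Cmod z = r)
      by (unfold z; rewrite Cmod_mult, Cmod_Croot_pow, Cmod_R, Rabs_pos_eq; lra).
    destruct (Hc z ltac:(lra)) as [W [HW HW1]]. apply is_Cpseries_series in HW.
    assert (Hterm : forall n, Cmod (z ^ n * c n)%C = Cmod (c n) * r ^ n)
      by (intros n; rewrite Cmod_mult, Cmod_pow, Hz; ring).
    assert (HA' : is_series (fun n => Cmod (z ^ n * c n)%C) A)
      by (eapply is_series_ext; [|exact HA]; intros n; now rewrite Hterm).
    assert (Htail : Cmod (W - sum_n (fun n => z ^ n * c n)%C M) <= T).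
    { unfold T. rewrite <- (sum_n_ext _ _ M Hterm). exact (is_Cseries_tail_le _ _ _ M HW HA'). }
    rewrite (sum_n_Cext _ (fun n => z ^ n * c n)%C)
      by (intros n _; unfold b, z; rewrite Cpow_mult_l, <- RtoC_pow; ring).
    replace (sum_n (fun n => z ^ n * c n)%C M) with (W - (W - sum_n (fun n => z ^ n * c n)%C M))%C
      by ring.
    eapply Rle_trans; [apply Cmod_triangle|]. rewrite Cmod_opp. lra. }
  assert (HT : 0 <= T).
  { unfold T. apply Rge_le, Rge_minus, Rle_ge, sum_n_le_series; [|exact HA].
    intros n. apply Rmult_le_pos; [apply Cmod_ge_0|apply pow_le; lra]. }
  assert (Hpos : 0 < INR (S M)) by (apply lt_0_INR; lia).
  apply (Rmult_le_reg_l (INR (S M))); [exact Hpos|].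
  replace (sum_n (fun n => Cmod (c n) ^ 2 * r ^ (2 * n)) M)
    with (sum_n (fun n => Cmod (b n) ^ 2) M).
  2: { apply sum_n_ext. intros n. unfold b. rewrite Cmod_mult, Cmod_R, Rabs_pos_eq
         by (apply pow_le; lra). now rewrite Rpow_mult_distr, <- pow_mult, Nat.mul_comm. }
  rewrite <- Croot_parseval, sum_n_Reals, Rmult_comm, <- sum_cte.
  apply sum_Rle. intros k _. apply pow_incr. split; [apply Cmod_ge_0|apply Hk].
Qed.

Lemma Cpseries_sq_sum_le_r r N :
  0 < r < 1 -> sum_n (fun n => Cmod (c n) ^ 2 * r ^ (2 * n)) N <= 1.
Proof.
  intros Hr. set (rho := (1 + r) / 2).
  destruct (Hc (RtoC rho)) as [W [HW _]]; [rewrite Cmod_R, Rabs_pos_eq; unfold rho; lra|].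
  destruct (ex_series_weighted_Cpseries c rho W r ltac:(unfold rho; lra) HW ltac:(unfold rho; lra))
    as [SG HSG].
  assert (Hu0 : forall n, 0 <= Cmod (c n) * r ^ n)
    by (intros n; apply Rmult_le_pos; [apply Cmod_ge_0|apply pow_le; lra]).
  destruct (ex_series_le (K := R_AbsRing) (V := R_CompleteNormedModule)
              (fun n => Cmod (c n) * r ^ n) (fun n => (INR n + 1) ^ 2 * (Cmod (c n) * r ^ n)))
    as [A HA]; [|now exists SG|].
  { intros n. change norm with Rabs. rewrite Rabs_pos_eq by apply Hu0.
    pose proof (pos_INR n). rewrite <- (Rmult_1_l (Cmod (c n) * r ^ n)) at 1.
    apply Rmult_le_compat_r; [apply Hu0|nra]. }
  set (u := fun n => Cmod (c n) * r ^ n) in *.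
  set (Tsq := fun m => (1 + (A - sum_n u (m + N))) ^ 2).
  assert (Hlim : is_lim_seq Tsq 1).
  { replace (Finite 1) with (Rbar_mult (1 + (A - A)) (Rbar_mult (1 + (A - A)) 1))
      by (simpl; f_equal; ring).
    assert (Hpart : is_lim_seq (fun m => 1 + (A - sum_n u (m + N))) (1 + (A - A)))
      by (apply is_lim_seq_plus', is_lim_seq_minus'; [apply is_lim_seq_const|
            apply is_lim_seq_const|exact (proj1 (is_lim_seq_incr_n (sum_n u) N A) HA)]).
    apply is_lim_seq_mult'; [exact Hpart|].
    apply is_lim_seq_mult'; [exact Hpart|apply is_lim_seq_const]. }
  assert (Hle : forall m, sum_n (fun n => Cmod (c n) ^ 2 * r ^ (2 * n)) N <= Tsq m).
  { intros m. eapply Rle_trans; [apply sum_n_le_add|apply Cpseries_partial_sq_le; auto].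
    intros n. apply Rmult_le_pos; [apply pow2_ge_0|apply pow_le; lra]. }
  exact (is_lim_seq_le _ _ _ _ Hle (is_lim_seq_const _) Hlim).
Qed.

Lemma Cpseries_sq_sum_le N : sum_n (fun n => Cmod (c n) ^ 2) N <= 1.
Proof.
  apply (le_1_of_pow_scaled _ (2 * N)). intros r Hr.
  eapply Rle_trans; [|apply (Cpseries_sq_sum_le_r r N Hr)].
  rewrite !sum_n_Reals, Rmult_comm, scal_sum. apply sum_Rle. intros n Hn.
  apply Rmult_le_compat_l; [apply pow2_ge_0|].
  replace (2 * N)%nat with (2 * n + (2 * N - 2 * n))%nat by lia. rewrite pow_add.
  rewrite <- (Rmult_1_r (r ^ (2 * n))) at 2. apply Rmult_le_compat_l; [apply pow_le; lra|].
  rewrite <- (pow1 (2 * N - 2 * n)). apply pow_incr. lra.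
Qed.

End Bessel.

(** * The bound on S_u^* *)

Lemma log_coeffs_exp_form f gam : log_coeffs f gam -> forall z, in_disk z ->
  is_Cpseries gam z (CPSeries gam z) /\ f z = (Cexp (2 * CPSeries gam z) * z)%C.
Proof.
  intros [_ Hlog] z Hz. destruct (Hlog z Hz) as [L [E [HL [HE Hf]]]].
  assert (HLz : is_Cpseries gam z (CPSeries gam z)) by (apply CPSeries_correct; now exists L).
  split; [exact HLz|].
  apply is_Cpseries_series in HL, HLz. rewrite (is_Cseries_unique _ _ _ HL HLz) in HE.
  rewrite <- Hf, (is_cexp_unique _ _ HE). reflexivity.
Qed.

(* z f'(z) / f(z) - 1 = 2 z L'(z) for f(z) = z exp(2 L(z)). *)
Lemma Su_star_log_coeffs_bounded f gam : Su_star f -> log_coeffs f gam ->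
  forall z, 0 < Cmod z < 1 ->
  exists W, is_Cpseries (fun n => 2 * INR n * gam n)%C z W /\ Cmod W <= 1.
Proof.
  intros [_ [_ [_ Hsu]]] Hlog z Hz.
  set (L := CPSeries gam).
  assert (HL := log_coeffs_exp_form f gam Hlog).
  assert (Hzd : in_disk z) by (unfold in_disk; lra).
  assert (Hz0 : z <> RtoC 0) by (intros E; rewrite E, Cmod_0 in Hz; lra).
  destruct (is_Cderive_Cpseries gam L 1 z (fun w Hw => proj1 (HL w Hw)) (proj2 Hz))
    as [D [HD HdL]].
  exists (2 * z * D)%C. split.
  - apply is_Cpseries_series. eapply is_Cseries_ext; [|exact (is_Cseries_scal (2 * z) _ _ HD)].
    intros [|n]; [simpl; ring|]. simpl pred. rewrite Cpow_S. ring.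
  - destruct (Hsu z Hzd Hz0) as [Hfz [f'z [Hf' Hmod]]].
    set (E := Cexp (2 * L z)).
    assert (Hexp : is_Cderive (fun t => Cexp (2 * L t) * t)%C z ((2 * D * E) * z + E * 1)%C).
    { apply (is_Cderive_mult (fun t => Cexp (2 * L t))), is_Cderive_id.
      apply (is_Cderive_comp Cexp (fun t => 2 * L t)%C); [apply is_Cderive_Cexp|].
      replace (2 * D)%C with (0 * L z + 2 * D)%C by ring.
      exact (is_Cderive_mult _ _ z _ _ (is_Cderive_const 2 z) HdL). }
    apply (is_Cderive_ext_disk _ f z _ (fun t Ht => eq_sym (proj2 (HL t Ht))) Hzd) in Hexp.
    rewrite (is_Cderive_unique _ _ _ _ Hf' Hexp), (proj2 (HL z Hzd)) in Hmod. fold L E in Hmod.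
    assert (HE : E <> RtoC 0)
      by (intros HE; apply Hfz; rewrite (proj2 (HL z Hzd)); fold L E; rewrite HE; ring).
    replace (z * (2 * D * E * z + E * 1) / (E * z) - 1)%C with (2 * z * D)%C in Hmod
      by (field; split; assumption).
    lra.
Qed.

(* AM-GM: 24 a d <= 4 a^2 + 36 d^2. *)
Lemma hankel_bound_real a b d :
  0 <= a -> 0 <= b -> 0 <= d -> 4 * a ^ 2 + 16 * b ^ 2 + 36 * d ^ 2 <= 1 -> a * d + b ^ 2 <= 1 / 16.
Proof. intros Ha Hb Hd H. nra. Qed.

Theorem Su_star_H21_le f gam : Su_star f -> log_coeffs f gam -> Cmod (H21 gam) <= 1 / 16.
Proof.
  intros Hf Hlog.
  pose proof (Cpseries_sq_sum_le _ (Su_star_log_coeffs_bounded f gam Hf Hlog) 3) as Hbessel.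
  assert (Hc : forall n, Cmod (2 * INR n * gam n)%C = 2 * INR n * Cmod (gam n)).
  { intros n. rewrite !Cmod_mult, !Cmod_R, (Rabs_pos_eq (INR n)) by apply pos_INR.
    rewrite Rabs_pos_eq by lra. reflexivity. }
  rewrite sum_n_Reals, (sum_eq _ (fun n => (2 * INR n * Cmod (gam n)) ^ 2)) in Hbessel
    by (intros n _; now rewrite Hc).
  simpl sum_f_R0 in Hbessel. simpl INR in Hbessel.
  pose proof (Cmod_ge_0 (gam 0%nat)). pose proof (Cmod_ge_0 (gam 1%nat)).
  pose proof (Cmod_ge_0 (gam 2%nat)). pose proof (Cmod_ge_0 (gam 3%nat)).
  unfold H21. eapply Rle_trans; [apply Cmod_triangle|]. rewrite Cmod_opp, !Cmod_mult.
  replace (Cmod (gam 2%nat) * Cmod (gam 2%nat)) with (Cmod (gam 2%nat) ^ 2) by ring.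
  apply hankel_bound_real; try assumption. nra.
Qed.

(** * The extremal function z exp(z^2/2) *)

Definition extremal (z : C) : C := (Cexp (RtoC (1 / 2) * (z * z)) * z)%C.

Definition extremal_coeff (n : nat) : C :=
  match n with
  | O => RtoC 0
  | S m => if Nat.even m then (RtoC ((/ 2) ^ Nat.div2 m) * Cexp_coeff (Nat.div2 m))%C else RtoC 0
  end.

Definition extremal_gam (n : nat) : C := if Nat.eqb n 2 then RtoC (1 / 4) else RtoC 0.

Lemma extremal_analytic : analytic_on_disk extremal.
Proof.
  exists extremal_coeff. intros z _. apply is_Cpseries_series.
  set (g := (RtoC (1 / 2) * (z * z))%C).
  assert (Heven : forall k,
    (z ^ S (2 * k) * extremal_coeff (S (2 * k)))%C = (z * (g ^ k * Cexp_coeff k))%C).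
  { intros k. unfold extremal_coeff. cbv beta iota. rewrite Nat.even_even, Nat.div2_double.
    unfold g. rewrite Cpow_S, Cpow_mult_l, Cpow_mult_r, <- RtoC_pow.
    replace (1 / 2) with (/ 2) by field. replace (z ^ 2)%C with (z * z)%C by (simpl; ring). ring. }
  assert (Hodd : forall k, (z ^ S (S (2 * k)) * extremal_coeff (S (S (2 * k))))%C = RtoC 0).
  { intros k. replace (S (S (2 * k))) with (S (2 * k + 1)) by lia.
    unfold extremal_coeff. cbv beta iota. rewrite Nat.even_odd. ring. }
  apply is_series_decr_1.
  replace (plus _ _) with (extremal z)
    by (change (extremal z = extremal z + - (z ^ O * extremal_coeff O))%C; simpl; ring).
  apply (is_series_even_terms (fun k => z * (g ^ k * Cexp_coeff k))%C _ _ Heven Hodd).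
  replace (extremal z) with (z * Cexp g)%C by (unfold extremal; fold g; ring).
  apply is_Cseries_scal, is_Cpseries_series, is_cexp_Cexp.
Qed.

Lemma is_Cderive_extremal (z : C) :
  is_Cderive extremal z
    (z * Cexp (RtoC (1 / 2) * (z * z)) * z + Cexp (RtoC (1 / 2) * (z * z)) * 1)%C.
Proof.
  apply (is_Cderive_mult (fun t => Cexp (RtoC (1 / 2) * (t * t)))), is_Cderive_id.
  apply (is_Cderive_comp Cexp (fun t => RtoC (1 / 2) * (t * t))%C); [apply is_Cderive_Cexp|].
  pose proof (is_Cderive_mult _ _ z _ _ (is_Cderive_const (RtoC (1 / 2)) z)
                (is_Cderive_mult _ _ z _ _ (is_Cderive_id z) (is_Cderive_id z))) as H.
  cbv beta in H.
  replace (RtoC 0 * (z * z) + RtoC (1 / 2) * (RtoC 1 * z + z * RtoC 1))%C with z in H; [exact H|].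
  rewrite RtoC_div by lra. field.
Qed.

Lemma extremal_Su_star : Su_star extremal.
Proof.
  split; [exact extremal_analytic|]. split; [unfold extremal; ring|]. split.
  - pose proof (is_Cderive_extremal (RtoC 0)) as H.
    replace (RtoC (1 / 2) * (RtoC 0 * RtoC 0))%C with (RtoC 0) in H by ring.
    rewrite Cexp_0 in H. replace (RtoC 0 * RtoC 1 * RtoC 0 + RtoC 1 * RtoC 1)%C with (RtoC 1) in H
      by ring. exact H.
  - intros z Hz Hz0. unfold in_disk in Hz.
    set (E := Cexp (RtoC (1 / 2) * (z * z))).
    assert (HE : E <> RtoC 0).
    { apply Cexp_neq_0. rewrite !Cmod_mult, Cmod_R, Rabs_pos_eq by lra.
      pose proof (Cmod_ge_0 z). nra. }
    assert (Hf : extremal z <> RtoC 0) by (apply Cmult_neq_0; assumption).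
    split; [exact Hf|]. eexists. split; [apply is_Cderive_extremal|]. fold E.
    replace (z * (z * E * z + E * 1) / extremal z - 1)%C with (z * z)%C
      by (unfold extremal; fold E; field; split; assumption).
    rewrite Cmod_mult. pose proof (Cmod_ge_0 z). nra.
Qed.

Lemma extremal_log_coeffs : log_coeffs extremal extremal_gam.
Proof.
  split; [reflexivity|]. intros z _.
  exists (RtoC (1 / 4) * (z * z))%C, (Cexp (RtoC (1 / 2) * (z * z))). split; [|split].
  - apply is_Cpseries_series.
    assert (Hsum : @eq C (sum_n (fun n => z ^ n * extremal_gam n)%C 2) (RtoC (1 / 4) * (z * z))%C)
      by (rewrite !sum_n_CSn, sum_O; unfold extremal_gam; simpl; ring).
    rewrite <- Hsum. apply (is_series_finite (V := C_NormedModule)). intros n Hn.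
    unfold extremal_gam. destruct (Nat.eqb_spec n 2); [lia|]. apply Cmult_0_r.
  - replace (2 * (RtoC (1 / 4) * (z * z)))%C with (RtoC (1 / 2) * (z * z))%C
      by (rewrite !RtoC_div by lra; field; apply RtoC_neq_0; lra).
    apply is_cexp_Cexp.
  - reflexivity.
Qed.

Lemma H21_extremal : Cmod (H21 extremal_gam) = 1 / 16.
Proof.
  unfold H21, extremal_gam. simpl.
  replace (RtoC 0 * RtoC 0 - RtoC (1 / 4) * RtoC (1 / 4))%C with (RtoC (- (1 / 16)))
    by (rewrite <- !RtoC_mult, <- RtoC_minus; f_equal; field).
  rewrite Cmod_R, Rabs_left; lra.
Qed.

Theorem mainTheorem3 :
  (forall (f : C -> C) (gam : nat -> C),
      Su_star f -> log_coeffs f gam -> Cmod (H21 gam) <= 1 / 16) /\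
  (exists (f : C -> C) (gam : nat -> C),
      Su_star f /\ log_coeffs f gam /\ Cmod (H21 gam) = 1 / 16).
Proof.
  split.
  - exact Su_star_H21_le.
  - exists extremal, extremal_gam.
    split; [exact extremal_Su_star|]. split; [exact extremal_log_coeffs|exact H21_extremal].
Qed.
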